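(* Let $\lambda=(\lambda_1\ge\dots\ge\lambda_n)$ be a singular integral dominant weight (integers with $\lambda_j=\lambda_{j+1}$ for some $j$), and let $\lambda'=(\lambda'_1>\dots>\lambda'_n)$ be any regular integral dominant weight. Then the normal fan of $GT_{\lambda'}$ refines the normal fan of $GT_\lambda$.
   Context: For an integral dominant weight $\nu$, $GT_\nu\subset\mathbb R^{n(n+1)/2}$, with coordinates $A_{i,j}$ for $0\le i\le n-1$, $1\le j\le n-i$, is the polytope defined by $A_{0,j}=\nu_j$ and $A_{i,j}\ge A_{i+1,j}\ge A_{i,j+1}$ for $0\le i\le n-2$, $1\le j\le n-i-1$. The normal fan of a polytope $P$ is the collection of cones $\{c:\ \langle c,\cdot\rangle \text{ is maximized on } P \text{ along a given face}\}$ in the dual space; one fan refines another if each cone of the first is contained in a cone of the second. *)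

From HB Require Import structures.
From mathcomp Require Import all_boot all_order all_algebra.
From mathcomp Require Import classical_sets reals.
Set Implicit Arguments. Unset Strict Implicit. Unset Printing Implicit Defensive.
Import Order.TTheory GRing.Theory Num.Theory.
Local Open Scope ring_scope.
Local Open Scope classical_set_scope.

(* Index set of the Gelfand-Tsetlin coordinates A_{i,j}, 0 <= i <= n-1,
   1 <= j <= n-i.  The pair (i, j0) of ordinals encodes A_{i, j0+1};
   the constraint i + j0 < n is j0+1 <= n-i. *)
Definition gtidx (n : nat) := {p : 'I_n * 'I_n | (p.1 : nat) + p.2 < n}%N.

Definition gtpt (R : realType) (n : nat) := gtidx n -> R.

(* A_{i,j} with the paper's indexing (j is 1-based); 0 outside the index set. *)
Definition coord (R : realType) (n : nat) (A : gtpt R n) (i j : nat) : R :=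
  if [pick k : gtidx n | ((val k).1 == i :> nat) && ((val k).2.+1 == j)%N]
  is Some k then A k else 0.

(* Weights are ν : nat -> int with components ν_1, ..., ν_n (1-based). *)
Definition dominant (n : nat) (nu : nat -> int) : Prop :=
  forall j : nat, (1 <= j < n)%N -> nu j.+1 <= nu j.
Definition regular (n : nat) (nu : nat -> int) : Prop :=
  forall j : nat, (1 <= j < n)%N -> nu j.+1 < nu j.
Definition singular (n : nat) (nu : nat -> int) : Prop :=
  exists j : nat, (1 <= j < n)%N /\ nu j = nu j.+1.

Definition GT (R : realType) (n : nat) (nu : nat -> int) : set (gtpt R n) :=
  [set A | (forall j : nat, (1 <= j <= n)%N -> coord A 0 j = (nu j)%:~R) /\
           (forall i j : nat, (i <= n - 2)%N -> (1 <= j <= n - i - 1)%N ->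
               coord A i.+1 j <= coord A i j /\ coord A i j.+1 <= coord A i.+1 j)].

Definition pairing (R : realType) (n : nat) (c A : gtpt R n) : R :=
  \sum_(k : gtidx n) c k * A k.

Definition argmax (R : realType) (n : nat) (P : set (gtpt R n)) (c : gtpt R n)
  : set (gtpt R n) :=
  [set x | P x /\ forall y, P y -> pairing c y <= pairing c x].

Definition face (R : realType) (n : nat) (P F : set (gtpt R n)) : Prop :=
  exists c, F = argmax P c.

Definition normal_cone (R : realType) (n : nat) (P F : set (gtpt R n))
  : set (gtpt R n) :=
  [set c | F `<=` argmax P c].

Definition normal_fan (R : realType) (n : nat) (P : set (gtpt R n))
  : set (set (gtpt R n)) :=
  [set C | exists F, face P F /\ C = normal_cone P F].

Definition refines (T : Type) (S1 S2 : set (set T)) : Prop :=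
  forall C, S1 C -> exists D, S2 D /\ C `<=` D.

(* The normal fan of a polytope is unchanged by positive scaling, and the
   normal fan of a Minkowski sum P + Q refines that of P: if <c, .> is
   maximised on P + Q at p + q, it is maximised on P at p.  For t large the
   weight mu := t lam' - lam is dominant, and t GT_lam' = GT_lam + GT_mu: a
   pattern with top row lam + mu splits into patterns with top rows lam and mu
   by choosing the lam-part row after row, each entry as small as interlacing
   allows.  Maximisers exist because Gelfand-Tsetlin polytopes are compact. *)

From HB Require Import structures.
From mathcomp Require Import all_boot all_order all_algebra.
From mathcomp Require Import boolp classical_sets reals topology normedtype derive.
From mathcomp Require Import zify ring lra.
(* Imported last, so that [coord] is the one of [Defs] and not that of [vector]. *)
From Pilot Require Import Defs.
Set Implicit Arguments. Unset Strict Implicit. Unset Printing Implicit Defensive.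
Import Order.TTheory GRing.Theory Num.Theory.
Import numFieldNormedType.Exports.
Local Open Scope ring_scope.
Local Open Scope classical_set_scope.

Lemma ler_subMn_int (a a' b b' : int) (t : nat) :
  a' < a -> b - b' <= t%:R -> a' *+ t - b' <= a *+ t - b.
Proof.
move=> lt_a'a le_bt; rewrite -[a *+ t]mulr_natr -[a' *+ t]mulr_natr.
have le_t : t%:R <= (a - a') * t%:R by rewrite ler_peMl // lerBrDr addrC lezD1.
rewrite -subr_ge0 (_ : _ - _ = ((a - a') * t%:R - t%:R) + (t%:R - (b - b'))).
  by rewrite addr_ge0 // subr_ge0.
by ring.
Qed.

Lemma dominant_complement (n : nat) (lam lam' : nat -> int) : regular n lam' ->
  exists2 t : nat, (0 < t)%N & dominant n (fun j => lam' j *+ t - lam j).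
Proof.
move=> reg_lam'; exists (\sum_(j < n) `|lam j - lam j.+1|%N).+1 => // j jn.
apply: ler_subMn_int; first exact: reg_lam'.
have /andP[_ ltjn] := jn.
apply: le_trans (ler_norm _) _; rewrite -abszE -natz ler_nat ltnW // ltnS.
by rewrite (bigD1 (Ordinal ltjn)) //= leq_addr.
Qed.

Section GelfandTsetlinArrays.
Variables (R : realType) (n : nat).

(* [a i j] stands for A_{i,j}; only the entries with 0 < j and i + j <= n matter. *)
Definition gt_array (top : nat -> R) (a : nat -> nat -> R) : Prop :=
  (forall j, (1 <= j <= n)%N -> a 0%N j = top j) /\
  (forall i j, (0 < j)%N -> (i + j < n)%N -> a i.+1 j <= a i j /\ a i j.+1 <= a i.+1 j).

Definition gt_point (a : nat -> nat -> R) : gtpt R n :=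
  fun k => a (val k).1 (val k).2.+1.

Lemma GT_gt_arrayE (nu : nat -> int) (A : gtpt R n) :
  GT nu A <-> gt_array (fun j => (nu j)%:~R) (coord A).
Proof.
split=> -[top interlace]; split=> // i j.
  by move=> j_gt0 ijn; apply: interlace; lia.
by move=> ni /andP[j_gt0 jn]; apply: interlace; lia.
Qed.

Lemma coord_val (A : gtpt R n) (k : gtidx n) : coord A (val k).1 (val k).2.+1 = A k.
Proof.
rewrite /coord; case: pickP => [k' /andP[/eqP k'1 /eqP k'2]|/(_ k)]; last by rewrite !eqxx.
congr A; apply: val_inj; move: k'1 k'2.
by case: (val k') (val k) => [a b] [c d] /= ac [bd]; congr pair; apply: val_inj.
Qed.

Lemma coord_gt_point (a : nat -> nat -> R) i j :
  (0 < j)%N -> (i + j <= n)%N -> coord (gt_point a) i j = a i j.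
Proof.
move=> j_gt0 ijn; have i_lt_n : (i < n)%N by lia.
have j'_lt_n : (j.-1 < n)%N by lia.
have ij'n : (i + j.-1 < n)%N by lia.
by have := coord_val (gt_point a) (exist _ (Ordinal i_lt_n, Ordinal j'_lt_n) ij'n);
  rewrite /gt_point /= prednK.
Qed.

Lemma coord_scaled_sum (A B C : gtpt R n) (s : R) :
  (forall k, C k = s * (A k + B k)) ->
  forall i j, coord C i j = s * (coord A i j + coord B i j).
Proof. by move=> CE i j; rewrite /coord; case: pickP => // _; rewrite addr0 mulr0. Qed.

Lemma gt_array_eq (top : nat -> R) (a b : nat -> nat -> R) :
  (forall i j, (0 < j)%N -> (i + j <= n)%N -> a i j = b i j) ->
  gt_array top a -> gt_array top b.
Proof.
move=> ab [top_a interlace]; split=> [j /andP[j_gt0 jn]|i j j_gt0 ijn].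
  by rewrite -ab ?top_a ?j_gt0.
by rewrite -!ab; [exact: interlace | lia..].
Qed.

Lemma GT_gt_point (nu : nat -> int) (a : nat -> nat -> R) :
  gt_array (fun j => (nu j)%:~R) a -> GT nu (gt_point a).
Proof.
by move=> arr_a; apply/GT_gt_arrayE; apply: gt_array_eq arr_a => *; rewrite coord_gt_point.
Qed.

Lemma gt_array_add (top1 top2 : nat -> R) (a b : nat -> nat -> R) :
  gt_array top1 a -> gt_array top2 b ->
  gt_array (fun j => top1 j + top2 j) (fun i j => a i j + b i j).
Proof.
move=> [top_a interlace_a] [top_b interlace_b]; split=> [j jn|i j j_gt0 ijn].
  by rewrite top_a ?top_b.
have [? ?] := interlace_a i j j_gt0 ijn; have [? ?] := interlace_b i j j_gt0 ijn.
by split; apply: lerD.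
Qed.

Lemma gt_array_scale (s : R) (top : nat -> R) (a : nat -> nat -> R) : 0 <= s ->
  gt_array top a -> gt_array (fun j => s * top j) (fun i j => s * a i j).
Proof.
move=> s_ge0 [top_a interlace]; split=> [j jn|i j j_gt0 ijn]; first by rewrite top_a.
by have [? ?] := interlace i j j_gt0 ijn; split; apply: ler_wpM2l.
Qed.

Lemma gt_array_bounded (top : nat -> R) (a : nat -> nat -> R) (B : R) :
  (forall j, (1 <= j <= n)%N -> `|top j| <= B) -> gt_array top a ->
  forall i j, (0 < j)%N -> (i + j <= n)%N -> `|a i j| <= B.
Proof.
move=> top_le [top_a interlace]; elim=> [|i IH] j j_gt0 ijn.
  by rewrite top_a ?top_le ?j_gt0.
have [a_le a_ge] := interlace i j j_gt0 ijn.
have := IH j j_gt0 (ltnW ijn); have := IH j.+1 isT ltac:(by rewrite addnS).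
rewrite !ler_norml => /andP[lb _] /andP[_ ub].
by rewrite (le_trans lb a_ge) (le_trans a_le ub).
Qed.

Lemma GT_nonempty (nu : nat -> int) : dominant n nu -> @GT R n nu !=set0.
Proof.
move=> dom_nu; exists (gt_point (fun i j => (nu (i + j)%N)%:~R)); apply: GT_gt_point.
split=> // i j j_gt0 ijn; rewrite addSn addnS lexx ler_int; split=> //.
by apply: dom_nu; rewrite ijn andbT; lia.
Qed.

Definition weakly_decreasing (f : nat -> R) := forall j, (1 <= j < n)%N -> f j.+1 <= f j.

Lemma dominant_weakly_decreasing (nu : nat -> int) :
  dominant n nu -> weakly_decreasing (fun j => (nu j)%:~R).
Proof. by move=> dom_nu j /dom_nu; rewrite ler_int. Qed.

Section GreedySplit.
Variables (lam mu : nat -> R) (Z : nat -> nat -> R).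

Hypotheses (dec_lam : weakly_decreasing lam) (dec_mu : weakly_decreasing mu).
Hypothesis Z_gt : gt_array (fun j => lam j + mu j) Z.

Fixpoint greedy_part (i : nat) : nat -> R :=
  if i is i'.+1 then fun j =>
    Num.max (greedy_part i' j.+1) (Z i j - (Z i' j - greedy_part i' j))
  else lam.

Let x := greedy_part.
Let y i j := Z i j - x i j.

Definition rows_decreasing i :=
  forall j, (0 < j)%N -> (i + j < n)%N -> x i j.+1 <= x i j /\ y i j.+1 <= y i j.

Lemma greedy_interlace i : rows_decreasing i ->
  forall j, (0 < j)%N -> (i + j < n)%N ->
  [/\ x i.+1 j <= x i j, x i j.+1 <= x i.+1 j, y i.+1 j <= y i j & y i j.+1 <= y i.+1 j].
Proof.
move=> dec_i j j_gt0 ijn; have [x_dec y_dec] := dec_i j j_gt0 ijn.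
have [Z_le Z_ge] := Z_gt.2 i j j_gt0 ijn.
have xE : x i.+1 j = Num.max (x i j.+1) (Z i.+1 j - y i j) by [].
have x_ge : x i j.+1 <= x i.+1 j /\ Z i.+1 j - y i j <= x i.+1 j.
  by rewrite xE !le_max !lexx orbT.
have x_le : x i.+1 j <= x i j /\ x i.+1 j <= Z i.+1 j - y i j.+1.
  move: y_dec; rewrite xE !ge_max x_dec /= /y => y_dec.
  by split; [|apply/andP; split]; lra.
by move: x_ge x_le y_dec; rewrite /y; split; lra.
Qed.

Lemma greedy_rows_decreasing i : rows_decreasing i.
Proof.
elim: i => [|i IH] j j_gt0 ijn.
  have [Z_top _] := Z_gt.
  rewrite /y /= !Z_top ?j_gt0 //=; try lia.
  by rewrite !(addrC (lam _)) !addrK; split; [apply: dec_lam | apply: dec_mu]; lia.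
have [x_le _ y_le _] := greedy_interlace IH (j := j.+1) isT ltac:(lia).
have [_ x_ge _ y_ge] := greedy_interlace IH j_gt0 ltac:(lia).
by split; [apply: le_trans x_le x_ge | apply: le_trans y_le y_ge].
Qed.

Lemma gt_array_split : exists a, gt_array lam a /\ gt_array mu (fun i j => Z i j - a i j).
Proof.
have [Z_top _] := Z_gt; exists x.
have interlace i := greedy_interlace (@greedy_rows_decreasing i).
split; first by split=> // i j j_gt0 ijn; have [] := interlace i j j_gt0 ijn.
split=> [j jn | i j j_gt0 ijn]; first by rewrite Z_top // addrC addKr.
by have [] := interlace i j j_gt0 ijn.
Qed.

End GreedySplit.

Lemma GT_scaled_sum (lam mu lam' : nat -> int) (t : R) :
  0 < t -> dominant n lam -> dominant n mu ->
  (forall j, (lam j + mu j)%:~R = t * (lam' j)%:~R) ->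
  forall z : gtpt R n, GT lam' z <->
    exists2 p, GT lam p & exists2 q, GT mu q & forall k, t * z k = p k + q k.
Proof.
move=> t_gt0 dom_lam dom_mu top_sum z; have t_neq0 : t != 0 by rewrite gt_eqF.
split=> [/GT_gt_arrayE z_gt | [p /GT_gt_arrayE p_gt [q /GT_gt_arrayE q_gt zE]]].
  have Z_gt : gt_array (fun j => (lam j)%:~R + (mu j)%:~R) (fun i j => t * coord z i j).
    suff -> : (fun j => (lam j)%:~R + (mu j)%:~R) = (fun j => t * (lam' j)%:~R : R).
      exact: gt_array_scale (ltW t_gt0) z_gt.
    by apply: funext => j; rewrite -intrD top_sum.
  have [a [a_gt b_gt]] := gt_array_split (dominant_weakly_decreasing dom_lam)
    (dominant_weakly_decreasing dom_mu) Z_gt.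
  exists (gt_point a); first exact: GT_gt_point.
  exists (gt_point (fun i j => t * coord z i j - a i j)); first exact: GT_gt_point.
  by move=> k; rewrite /gt_point coord_val addrC subrK.
have zE' k : z k = t^-1 * (p k + q k) by rewrite -zE mulKf.
apply/GT_gt_arrayE; rewrite (funext (fun i => funext (coord_scaled_sum zE' i))).
suff -> : (fun j => (lam' j)%:~R) = (fun j => t^-1 * ((lam j)%:~R + (mu j)%:~R) : R).
  by apply: gt_array_scale; [rewrite invr_ge0 ltW | apply: gt_array_add].
by apply: funext => j; rewrite -intrD top_sum mulKf.
Qed.

End GelfandTsetlinArrays.

Section NormalFanOfScaledSum.
Variables (R : realType) (n : nat).

Lemma pairing_scaled_sum (c z p q : gtpt R n) (t : R) :
  (forall k, t * z k = p k + q k) -> t * pairing c z = pairing c p + pairing c q.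
Proof.
move=> zE; rewrite /pairing mulr_sumr -big_split.
by apply: eq_bigr => k _; rewrite mulrCA zE mulrDr.
Qed.

Lemma normal_fan_refines_scaled_sum (P Q P' : set (gtpt R n)) (t : R) : 0 < t ->
  (forall z, P' z <-> exists2 p, P p & exists2 q, Q q & forall k, t * z k = p k + q k) ->
  (forall c, argmax P' c !=set0) ->
  refines (normal_fan P') (normal_fan P).
Proof.
move=> t_gt0 P'E P'_max _ [_ [[c' ->] ->]].
exists (normal_cone P (argmax P c')); split.
  by exists (argmax P c'); split => //; exists c'.
move=> c c_normal x1 [Px1 x1_max]; have t_neq0 : t != 0 by rewrite gt_eqF.
pose mid (u v : gtpt R n) : gtpt R n := fun k => t^-1 * (u k + v k).
have midE u v k : t * mid u v k = u k + v k by rewrite mulVKf.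
have P'_mid u v : P u -> Q v -> P' (mid u v).
  by move=> Pu Qv; apply/P'E; exists u => //; exists v.
have [z [P'z z_max]] := P'_max c'; have [p Pp [q Qq zE]] := (P'E z).1 P'z.
have q_max q2 : Q q2 -> pairing c' q2 <= pairing c' q.
  move=> Qq2; have := z_max _ (P'_mid p q2 Pp Qq2).
  rewrite -(ler_pM2l t_gt0) (pairing_scaled_sum _ (midE p q2)).
  by rewrite (pairing_scaled_sum _ zE) lerD2l.
have w_max : argmax P' c' (mid x1 q).
  split=> [|u /P'E [p2 Pp2 [q2 Qq2 uE]]]; first exact: P'_mid.
  rewrite -(ler_pM2l t_gt0) (pairing_scaled_sum _ uE) (pairing_scaled_sum _ (midE x1 q)).
  by apply: lerD; [exact: x1_max | exact: q_max].
have [_ w_cmax] := c_normal _ w_max.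
split=> // x2 Px2; have := w_cmax _ (P'_mid x2 q Px2 Qq).
rewrite -(ler_pM2l t_gt0) (pairing_scaled_sum _ (midE x2 q)).
by rewrite (pairing_scaled_sum _ (midE x1 q)) lerD2r.
Qed.

End NormalFanOfScaledSum.

Lemma closed_forall (T : topologicalType) (I : Type) (S : I -> set T) :
  (forall i, closed (S i)) -> closed [set x | forall i, S i x].
Proof.
move=> S_closed x x_cl i; apply: S_closed => B /x_cl [y [Sy By]].
by exists y; split => //; exact: Sy.
Qed.

Lemma closed_le_continuous (T : topologicalType) (R : realType) (f g : T -> R) :
  continuous f -> continuous g -> closed [set x | f x <= g x].
Proof.
move=> f_cont g_cont.
rewrite (_ : [set x | f x <= g x] = (fun x => f x - g x) @^-1` [set r | r <= 0]).
  apply: preimage_closed; last exact: closed_le.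
  by move=> x _; exact: (@cvgB R R^o _ _ _ f g _ _ (f_cont x) (g_cont x)).
by apply/seteqP; split=> x /=; rewrite subr_le0.
Qed.

Section GelfandTsetlinCompact.
Import ArrowAsProduct.
Variables (R : realType) (n : nat).

Lemma coord_continuous i j : continuous (fun A : gtidx n -> R => coord A i j).
Proof.
rewrite /coord; case: pickP => [k _|_]; last exact: cst_continuous.
exact: (@proj_continuous _ (fun _ => R) k).
Qed.

Lemma pairing_continuous (c : gtpt R n) : continuous (fun A : gtidx n -> R => pairing c A).
Proof.
apply: (continuous_big add_continuous) => k _ A.
exact: cvgMl_tmp (@proj_continuous _ (fun _ => R) k A).
Qed.

Lemma GT_closed (nu : nat -> int) : closed (GT nu : set (gtidx n -> R)).
Proof.
apply: closedI; do ![apply: closed_forall => ?]; last first.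
  by apply: closedI; apply: closed_le_continuous; apply: coord_continuous.
apply: (@preimage_closed _ _ (fun A => coord A 0 _) [set r | r = _]); last exact: closed_eq.
by move=> A _; apply: coord_continuous.
Qed.

Lemma GT_compact (nu : nat -> int) : compact (GT nu : set (gtidx n -> R)).
Proof.
pose B := \sum_(j < n.+1) `|(nu j)%:~R : R|.
apply: (@subclosed_compact _ (GT nu) [set A | forall k, `[- B, B] (A k)] (@GT_closed nu)).
  exact: (@tychonoff _ (fun _ => R) _ (fun _ => @segment_compact R (- B) B)).
move=> A /GT_gt_arrayE A_gt k; rewrite /= in_itv /= -ler_norml -coord_val.
apply: (gt_array_bounded _ A_gt) => // [j /andP[_ jn]|]; last by case: k => -[i j] /=; lia.
rewrite /B (bigD1 (Ordinal (jn : (j < n.+1)%N))) //= lerDl.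
by apply: sumr_ge0 => *; exact: normr_ge0.
Qed.

Lemma GT_argmax (nu : nat -> int) :
  dominant n nu -> forall c : gtpt R n, argmax (GT nu) c !=set0.
Proof.
move=> dom_nu c; have [z GTz z_max] := compact_EVT_max (GT_nonempty R dom_nu)
  (@GT_compact nu) (continuous_subspaceT (@pairing_continuous c)).
by exists z; split=> [|y GTy]; [move: GTz | apply: z_max]; rewrite inE.
Qed.

End GelfandTsetlinCompact.

Theorem mainTheorem8 (R : realType) (n : nat) (lam lam' : nat -> int) :
  dominant n lam -> singular n lam -> regular n lam' ->
  refines (normal_fan (@GT R n lam')) (normal_fan (@GT R n lam)).
Proof.
move=> dom_lam _ reg_lam'.
have [t t_gt0 dom_mu] := dominant_complement lam reg_lam'.
apply: (@normal_fan_refines_scaled_sum _ _ _ (GT (fun j => lam' j *+ t - lam j)) _ t%:R).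
- by rewrite ltr0n.
- apply: GT_scaled_sum => //; first by rewrite ltr0n.
  by move=> j; rewrite addrC subrK rmorphMn mulr_natl.
- by apply: GT_argmax => j /reg_lam' /ltW.
Qed.
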